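(* Let $k$ be a perfect field of characteristic $p>0$. Let $V$ be a $k[\mathbb Z/p\mathbb Z]$-module and $W\subset V$ a $k[\mathbb Z/p\mathbb Z]$-submodule such that $V/W$ is a free $k[\mathbb Z/p\mathbb Z]$-module. Then for every integer $n\ge2$, the quotient $V^{\otimes n}/W^{\otimes n}$ is a free $k[\mathbb Z/p\mathbb Z]$-module.
   Context: Tensor products are over $k$, and $\mathbb Z/p\mathbb Z$ acts on $V^{\otimes n}$ and $W^{\otimes n}\subset V^{\otimes n}$ diagonally. *)

From HB Require Import structures.
From mathcomp Require Import all_boot all_order all_algebra.
From mathcomp Require Import finmap.
From mathcomp.multinomials Require Import monalg.

Set Implicit Arguments.
Unset Strict Implicit.
Unset Printing Implicit Defensive.

Import GRing.Theory.
Local Open Scope ring_scope.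

(* A field k of characteristic p > 0 is perfect iff Frobenius is onto. *)
Definition perfect_char (k : fieldType) (p : nat) : Prop :=
  forall x : k, exists y : k, y ^+ p = x.

Section Tensor.
Variable k : fieldType.

(* k-vector spaces are modelled as k^(A) = {malg k[A]} (finitely supported
   functions A -> k, i.e. free k-modules with basis A). *)

(* pure tensor u (x) w in k^(A) (x) k^(C) = k^(A * C) *)
Definition tens2 (A C : choiceType) (u : {malg k[A]}) (w : {malg k[C]})
  : {malg k[(A * C)%type]} :=
  \sum_(a <- msupp u) \sum_(c <- msupp w) << u@_a * w@_c *g (a, c) >>.

Definition tmap2 (A A' C C' : choiceType)
  (f : {malg k[A]} -> {malg k[A']}) (h : {malg k[C]} -> {malg k[C']})
  (F : {malg k[(A * C)%type]}) : {malg k[(A' * C')%type]} :=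
  \sum_(x <- msupp F) F@_x *: tens2 (f << x.1 >>) (h << x.2 >>).

(* basis of V^{(x) n}, V = k^(B):  B^n built as ((unit * B) * B) ... *)
Fixpoint tpowB (B : choiceType) (n : nat) : choiceType :=
  if n is n'.+1 then (tpowB B n' * B)%type else unit.

Fixpoint tpow_map (B : choiceType) (n : nat) (g : {malg k[B]} -> {malg k[B]})
  : {malg k[tpowB B n]} -> {malg k[tpowB B n]} :=
  match n return {malg k[tpowB B n]} -> {malg k[tpowB B n]} with
  | 0 => id
  | n'.+1 => tmap2 (@tpow_map B n' g) g
  end.

(* W^{(x) n} as a subspace of V^{(x) n}: the span of the pure tensors
   w_1 (x) ... (x) w_n with all w_i in W *)
Fixpoint tpow_sub (B : choiceType) (n : nat) (W : {malg k[B]} -> Prop)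
  : {malg k[tpowB B n]} -> Prop :=
  match n return {malg k[tpowB B n]} -> Prop with
  | 0 => fun _ => True
  | n'.+1 => fun F =>
      exists s : seq ({malg k[tpowB B n']} * {malg k[B]}),
        (forall x, x \in s -> @tpow_sub B n' W x.1 /\ W x.2) /\
        F = \sum_(x <- s) tens2 x.1 x.2
  end.

(* k[Z/pZ]-linear combination sum_j r_j . x_j, where the group-algebra
   coefficient r_j = sum_(i < p) c_(j,i) sigma^i, sigma acting by g *)
Definition kG_comb (p : nat) (M : lmodType k) (g : M -> M) (J : choiceType)
  (x : J -> M) (c : {malg k[(J * 'I_p)%type]}) : M :=
  \sum_(ji <- msupp c) c@_ji *: iter (nat_of_ord ji.2) g (x ji.1).

(* M/N is a free k[Z/pZ]-module (Z/pZ generated by sigma acting by g):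
   there is a family (x_j) whose images in M/N form a k[Z/pZ]-basis. *)
Definition free_quot (p : nat) (M : lmodType k) (g : M -> M) (N : M -> Prop)
  : Prop :=
  exists (J : choiceType) (x : J -> M),
    (forall m : M, exists c, N (m - @kG_comb p M g J x c)) /\
    (forall c, N (@kG_comb p M g J x c) -> c = 0).

End Tensor.

(* Let g generate the cyclic group G of order p.  If V1/N and V2/W are free
   over k[G], on the classes of (y_i) and (x_j), then (V1 (x) V2)/(N (x) W) is
   free on the classes of the e_a (x) x_j, with (e_a) the monomial basis of V1,
   and of the y_i (x) w_b, with (w_b) a k-basis of W.  They span:
   g^l (e_a (x) x_j) = g^l e_a (x) g^l x_j and (g^l e_a)_a is again a basis of
   V1, so these span V1 (x) V2 modulo V1 (x) W; likewise the y_i (x) g^l w_b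
   span V1 (x) W modulo N (x) W.  They are independent: id (x) P, with P a
   projection killing W and fixing the g^l x_j, isolates the first kind, and
   then Q (x) id, with Q killing N and fixing the g^l y_i, the second.
   Induction on n along V^(x)(n+1) = V^(x)n (x) V gives the result for every
   n. *)

From HB Require Import structures.
From mathcomp Require Import all_boot all_order all_algebra.
From mathcomp Require Import finmap.
From mathcomp.multinomials Require Import monalg.
From mathcomp Require Import boolp classical_sets.

Set Implicit Arguments.
Unset Strict Implicit.
Unset Printing Implicit Defensive.

Import GRing.Theory.
Local Open Scope ring_scope.

Section LinearCombination.
Variable k : fieldType.

Section Lcomb.
Variables (T : choiceType) (M : lmodType k).
Implicit Types (f : T -> M) (c : {malg k[T]}).

Definition lcomb f c : M := \sum_(t <- msupp c) c@_t *: f t.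

Lemma lcombEw f c (d : {fset T}) : (msupp c `<=` d)%fset ->
  lcomb f c = \sum_(t <- d) c@_t *: f t.
Proof.
move=> le_cd; apply: big_fset_incl => // t _ tNc.
by rewrite mcoeff_outdom // scale0r.
Qed.

Lemma lcomb_is_linear f : linear (lcomb f).
Proof.
move=> a c1 c2; set d := (msupp c1 `|` msupp c2)%fset.
have le_d : (msupp (a *: c1 + c2) `<=` d)%fset.
  exact: fsubset_trans (msuppD_le _ _) (fsetSU _ (msuppZ_le _ _)).
rewrite (lcombEw f le_d) (lcombEw f (fsubsetUl _ (msupp c2))).
rewrite (lcombEw f (fsubsetUr (msupp c1) _)) scaler_sumr -big_split /=.
by apply: eq_bigr => t _; rewrite mcoeffD mcoeffZ scalerDl scalerA.
Qed.

HB.instance Definition _ f :=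
  GRing.isLinear.Build k {malg k[T]} M *:%R (lcomb f) (lcomb_is_linear f).

Lemma lcombU f r t : lcomb f << r *g t >> = r *: f t.
Proof. by rewrite (lcombEw f msuppU_le) big_seq_fset1 mcoeffUU. Qed.

Lemma lcombU1 f t : lcomb f << t >> = f t.
Proof. by rewrite lcombU scale1r. Qed.

Lemma eq_in_lcomb f f' c : {in msupp c, f =1 f'} -> lcomb f c = lcomb f' c.
Proof. by move=> eq_ff'; apply: eq_big_seq => t /eq_ff' ->. Qed.

End Lcomb.

Lemma linear_lcomb (T : choiceType) (M N : lmodType k) (phi : {linear M -> N})
  (f : T -> M) c : phi (lcomb f c) = lcomb (phi \o f) c.
Proof. by rewrite linear_sum; apply: eq_bigr => t _; rewrite linearZ. Qed.

Lemma lcomb_monomials (T : choiceType) (c : {malg k[T]}) :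
  lcomb (fun t => << t >>) c = c.
Proof.
rewrite [RHS]monalgE; apply: eq_bigr => t _.
by apply/malgP => t' /=; rewrite (@mcoeffZ T k) !mcoeffU mulr_natr.
Qed.

Lemma mcoeff_lcomb (T X : choiceType) (f : T -> {malg k[X]}) c x :
  (lcomb f c)@_x = \sum_(t <- msupp c) c@_t * (f t)@_x.
Proof. by rewrite raddf_sum; apply: eq_bigr => t _; exact: mcoeffZ. Qed.

Definition mpush (T S : choiceType) (phi : T -> option S) :
    {malg k[T]} -> {malg k[S]} :=
  lcomb (fun t => oapp (fun s => << s >>) 0 (phi t)).

HB.instance Definition _ (T S : choiceType) (phi : T -> option S) :=
  GRing.Linear.copy (mpush phi) (lcomb _).

Lemma eq_linear_monomials (T : choiceType) (M : lmodType k)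
    (phi psi : {linear {malg k[T]} -> M}) :
  (forall t, phi << t >> = psi << t >>) -> phi =1 psi.
Proof.
move=> eq_phi c; rewrite -(lcomb_monomials c) !linear_lcomb.
by apply: eq_in_lcomb => t _ /=.
Qed.

Section Mpush.
Variables (T S : choiceType) (phi : T -> option S).

Lemma lcomb_mpush (M : lmodType k) (f : S -> M) c :
  lcomb f (mpush phi c) = lcomb (fun t => oapp f 0 (phi t)) c.
Proof.
rewrite linear_lcomb; apply: eq_in_lcomb => t _ /=.
by case: (phi t) => [s|] /=; rewrite ?lcombU1 ?linear0.
Qed.

Lemma mcoeff_mpush c t s : phi t = Some s ->
  (forall t', phi t' = Some s -> t' = t) -> (mpush phi c)@_s = c@_t.
Proof.
move=> phi_t phi_inj; rewrite -{2}(lcomb_monomials c) !mcoeff_lcomb.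
apply: eq_bigr => t' _; congr (_ * _); rewrite [in RHS]mcoeffU.
case E: (phi t') => [s'|] /=; last first.
  by rewrite mcoeff0; case: eqP => // tt'; rewrite tt' phi_t in E.
rewrite mcoeffU; have [tt' | ne] := eqVneq t' t.
  by move: E; rewrite tt' phi_t => -[->]; rewrite eqxx.
by case: eqP => // ss'; case/eqP: ne; apply: phi_inj; rewrite E ss'.
Qed.

Lemma mcoeff_mpush_out c s : (forall t, phi t != Some s) -> (mpush phi c)@_s = 0.
Proof.
move=> phi_s; rewrite mcoeff_lcomb big1 // => t _.
case: (phi t) (phi_s t) => [s'|] /= ne; last by rewrite mcoeff0 mulr0.
by rewrite mcoeffU; case: (s' =P s) ne => [-> | _]; rewrite ?eqxx ?mulr0.
Qed.

End Mpush.

End LinearCombination.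

Definition subspace (k : fieldType) (M : lmodType k) (N : M -> Prop) :=
  N 0 /\ forall a u v, N u -> N v -> N (a *: u + v).

Section Subspace.
Variables (k : fieldType) (M : lmodType k).

Lemma zero_subspace : subspace (fun m : M => m = 0).
Proof. by split=> // a u v -> ->; rewrite scaler0 addr0. Qed.

Lemma subspace_preim (M' : lmodType k) (phi : {linear M' -> M}) N :
  subspace N -> subspace (fun m : M' => N (phi m)).
Proof.
by case=> N0 NP; split=> [|a u v Nu Nv]; rewrite ?linear0 ?linearP; auto.
Qed.

Variables (N : M -> Prop) (subN : subspace N).

Lemma subspace0 : N 0. Proof. by case: subN. Qed.

Lemma subspaceZ a u : N u -> N (a *: u).
Proof. by case: subN => N0 NP Nu; rewrite -[_ *: _]addr0; apply: NP. Qed.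

Lemma subspaceD u v : N u -> N v -> N (u + v).
Proof. by case: subN => _ NP Nu Nv; rewrite -[u]scale1r; apply: NP. Qed.

Lemma subspaceB u v : N u -> N v -> N (u - v).
Proof. by move=> Nu Nv; rewrite -scaleN1r addrC; apply: subN.2. Qed.

Lemma subspace_lcomb (T : choiceType) (f : T -> M) c :
  (forall t, t \in msupp c -> N (f t)) -> N (lcomb f c).
Proof.
move=> Nf; rewrite /lcomb big_seq; apply: big_ind => [|u v|t /Nf].
- exact: subspace0.
- exact: subspaceD.
- exact: subspaceZ.
Qed.

End Subspace.

Arguments zero_subspace {k M}.

Section FreeModulo.
Variables (k : fieldType) (T : choiceType) (M : lmodType k).
Implicit Types (N : M -> Prop) (f : T -> M).

Definition span_mod N f (m : M) := exists c, N (m - lcomb f c).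

Definition free_mod N f := forall c, N (lcomb f c) -> c = 0.

Definition free_family f := free_mod (fun m => m = 0) f.

Lemma free_mod_family N f : N 0 -> free_mod N f -> free_family f.
Proof. by move=> N0 freef c fc0; apply: freef; rewrite fc0. Qed.

Lemma span_mod_subspace N f : subspace N -> subspace (span_mod N f).
Proof.
move=> subN; split; first by exists 0; rewrite linear0 subr0; apply: subspace0.
move=> a u v [cu Nu] [cv Nv]; exists (a *: cu + cv); rewrite linearP.
by rewrite opprD addrACA -scalerBr; apply: subN.2.
Qed.

Lemma span_mod_sub N f m : subspace N -> N m -> span_mod N f m.
Proof. by move=> subN Nm; exists 0; rewrite linear0 subr0. Qed.

Lemma span_mod_family N f t : subspace N -> span_mod N f (f t).
Proof. by move=> subN; exists << t >>; rewrite lcombU1 subrr; apply: subspace0. Qed.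

Lemma free_mod_projection N f : subspace N ->
    (forall m, span_mod N f m) -> free_mod N f ->
  exists P : {linear M -> M}, (forall n, N n -> P n = 0) /\ (forall t, P (f t) = f t).
Proof.
move=> subN spanf freef.
pose coord m := sval (cid (spanf m)).
have coordP m : N (m - lcomb f (coord m)) := svalP (cid (spanf m)).
have coordE m c : N (m - lcomb f c) -> coord m = c.
  move=> Nc; apply/eqP; rewrite -subr_eq0; apply/eqP/freef.
  rewrite linearB; have := subspaceB subN Nc (coordP m).
  by rewrite opprB addrC -addrA addKr.
have coord_linear : linear (lcomb f \o coord).
  move=> a u v /=; rewrite -linearP; congr (lcomb f _); apply: coordE.
  rewrite linearP opprD addrACA -scalerBr.
  exact: subN.2 _ _ _ (coordP u) (coordP v).
pose P : {linear M -> M} := HB.pack_for {linear M -> M} (lcomb f \o coord)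
  (GRing.isLinear.Build k M M *:%R _ coord_linear).
exists P; split=> [n Nn | t]; rewrite /P /=.
  by rewrite (coordE n 0) linear0 ?subr0.
by rewrite (coordE _ << t >>) lcombU1 // subrr; apply: subspace0.
Qed.

End FreeModulo.

Section Tensor.
Variables (k : fieldType) (A C : choiceType).
Implicit Types (u : {malg k[A]}) (w : {malg k[C]}).

Lemma tens2E u w a c : (tens2 u w)@_(a, c) = u@_a * w@_c.
Proof.
rewrite -{2}(lcomb_monomials u) -{2}(lcomb_monomials w) !mcoeff_lcomb.
rewrite big_distrlr /tens2 raddf_sum; apply: eq_bigr => a' _ /=.
rewrite raddf_sum; apply: eq_bigr => c' _ /=.
rewrite !mcoeffU xpair_eqE.
by case: (a' == a); case: (c' == c); rewrite /= ?mulr1 ?mulr0 ?mul0r.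
Qed.

Lemma tens2_is_bilinear : bilinear_for *:%R *:%R (@tens2 k A C).
Proof.
split=> [w | u] a u1 u2; apply/malgP => -[a' c']; rewrite !(mcoeffD, mcoeffZ, tens2E).
  by rewrite mulrDl mulrA.
by rewrite mulrDr mulrCA.
Qed.

HB.instance Definition _ :=
  bilinear_isBilinear.Build k {malg k[A]} {malg k[C]} {malg k[(A * C)%type]}
    *:%R *:%R (@tens2 k A C) tens2_is_bilinear.

Lemma tens2U a c :
  tens2 << a >> << c >> = << (a, c) >> :> {malg k[(A * C)%type]}.
Proof.
apply/malgP => -[a' c']; rewrite tens2E !mcoeffU xpair_eqE.
by case: (a == a'); case: (c == c'); rewrite ?mulr1 ?mulr0.
Qed.

Lemma tens2_lcombl (T : choiceType) (f : T -> {malg k[A]}) c w :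
  tens2 (lcomb f c) w = lcomb (fun t => tens2 (f t) w) c.
Proof. by rewrite linear_sumlz; apply: eq_bigr => t _; rewrite linearZl_LR. Qed.

Lemma tens2_lcombr (T : choiceType) u (f : T -> {malg k[C]}) c :
  tens2 u (lcomb f c) = lcomb (fun t => tens2 u (f t)) c.
Proof. by rewrite linear_sumr; apply: eq_bigr => t _; rewrite linearZr_LR. Qed.

Lemma tens2_monomials (F : {malg k[(A * C)%type]}) :
  F = lcomb (fun x => tens2 << x.1 >> << x.2 >>) F.
Proof.
by rewrite -{1}(lcomb_monomials F); apply: eq_in_lcomb => -[a c] _; rewrite tens2U.
Qed.

End Tensor.

HB.instance Definition _ (k : fieldType) (A A' C C' : choiceType)
    (f : {malg k[A]} -> {malg k[A']}) (h : {malg k[C]} -> {malg k[C']}) :=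
  GRing.Linear.copy (tmap2 f h) (lcomb _).

Section TensorMap.
Variables (k : fieldType) (A A' C C' : choiceType).

Lemma tmap2E (f : {malg k[A]} -> {malg k[A']}) (h : {malg k[C]} -> {malg k[C']}) :
  tmap2 f h = lcomb (fun x => tens2 (f << x.1 >>) (h << x.2 >>)).
Proof. by []. Qed.

Lemma tmap2U (f : {malg k[A]} -> {malg k[A']}) (h : {malg k[C]} -> {malg k[C']}) x :
  tmap2 f h << x >> = tens2 (f << x.1 >>) (h << x.2 >>).
Proof. by rewrite tmap2E lcombU1. Qed.

Lemma tmap2_tens2 (f : {linear {malg k[A]} -> {malg k[A']}})
    (h : {linear {malg k[C]} -> {malg k[C']}}) u w :
  tmap2 f h (tens2 u w) = tens2 (f u) (h w).
Proof.
rewrite -[u in LHS]lcomb_monomials tens2_lcombl linear_lcomb.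
rewrite -[u in RHS]lcomb_monomials linear_lcomb tens2_lcombl.
apply: eq_in_lcomb => a _ /=.
rewrite -[w in LHS]lcomb_monomials tens2_lcombr linear_lcomb.
rewrite -[w in RHS]lcomb_monomials linear_lcomb tens2_lcombr.
by apply: eq_in_lcomb => c _ /=; rewrite tens2U tmap2U.
Qed.

End TensorMap.

Section Slices.
Variables (k : fieldType) (A C : choiceType).
Implicit Types (u : {malg k[A]}) (w : {malg k[C]}) (F : {malg k[(A * C)%type]}).

Definition tswap : {malg k[(A * C)%type]} -> {malg k[(C * A)%type]} :=
  mpush (fun x => Some (x.2, x.1)).

Definition mslicel (a : A) : {malg k[(A * C)%type]} -> {malg k[C]} :=
  mpush (fun x => if x.1 == a then Some x.2 else None).

Definition mslicer (c : C) : {malg k[(A * C)%type]} -> {malg k[A]} :=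
  mpush (fun x => if x.2 == c then Some x.1 else None).

HB.instance Definition _ := GRing.Linear.on tswap.
HB.instance Definition _ a := GRing.Linear.on (mslicel a).
HB.instance Definition _ c := GRing.Linear.on (mslicer c).

Lemma mcoeff_tswap F a c : (tswap F)@_(c, a) = F@_(a, c).
Proof. by apply: mcoeff_mpush => // -[a' c'] [-> ->]. Qed.

Lemma mcoeff_mslicel F a c : (mslicel a F)@_c = F@_(a, c).
Proof.
apply: mcoeff_mpush => [|[a' c'] /=]; first by rewrite eqxx.
by case: eqP => // -> [->].
Qed.

Lemma mcoeff_mslicer F a c : (mslicer c F)@_a = F@_(a, c).
Proof.
apply: mcoeff_mpush => [|[a' c'] /=]; first by rewrite eqxx.
by case: eqP => // -> [->].
Qed.

Lemma tswap_tens2 u w : tswap (tens2 u w) = tens2 w u.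
Proof. by apply/malgP => -[c a]; rewrite mcoeff_tswap !tens2E mulrC. Qed.

Lemma mslicel_tens2 u w a : mslicel a (tens2 u w) = u@_a *: w.
Proof. by apply/malgP => c; rewrite mcoeffZ mcoeff_mslicel tens2E. Qed.

Lemma mslicer_tens2 u w c : mslicer c (tens2 u w) = w@_c *: u.
Proof. by apply/malgP => a; rewrite mcoeffZ mcoeff_mslicer tens2E mulrC. Qed.

End Slices.

Arguments tswap {k A C}.

Section FreeTensor.
Variable k : fieldType.

Lemma free_monomials (T : choiceType) :
  free_family (fun t : T => << t >> : {malg k[T]}).
Proof. by move=> c; rewrite lcomb_monomials. Qed.

Lemma free_family_comp (T : choiceType) (M N : lmodType k) (phi : {linear M -> N})
    (f : T -> M) :
  injective phi -> free_family f -> free_family (phi \o f).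
Proof.
move=> phi_inj freef c; rewrite -linear_lcomb => /eqP.
by rewrite raddf_eq0 // => /eqP /freef.
Qed.

Lemma eq_free_family (T : choiceType) (M : lmodType k) (f f' : T -> M) :
  f =1 f' -> free_family f -> free_family f'.
Proof.
move=> eq_ff' freef c.
by rewrite -(eq_in_lcomb (c := c) (fun t _ => eq_ff' t)); apply: freef.
Qed.

Lemma free_family_of_comp (T : choiceType) (M N : lmodType k) (phi : {linear M -> N})
    (f : T -> M) :
  free_family (phi \o f) -> free_family f.
Proof. by move=> freef c fc0; apply: freef; rewrite -linear_lcomb fc0 linear0. Qed.

Lemma mslicer_tmap2 (A A' C : choiceType) (f : {linear {malg k[A]} -> {malg k[A']}})
    (c : C) (F : {malg k[(A * C)%type]}) :
  mslicer c (tmap2 f idfun F) = f (mslicer c F).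
Proof.
have eq_mono x : (mslicer c \o tmap2 f idfun) << x >> = (f \o mslicer c) << x >>.
  by case: x => a c' /=; rewrite tmap2U mslicer_tens2 -tens2U mslicer_tens2 linearZ.
exact: (@eq_linear_monomials _ _ _ (mslicer c \o tmap2 f idfun) (f \o mslicer c)
  eq_mono F).
Qed.

Lemma tmap2_idr_eq0 (A A' C : choiceType) (f : {linear {malg k[A]} -> {malg k[A']}})
    (F : {malg k[(A * C)%type]}) :
  (forall u, f u = 0 -> u = 0) -> tmap2 f idfun F = 0 -> F = 0.
Proof.
move=> f_eq0 F0; apply/malgP => -[a c]; rewrite mcoeff0 -mcoeff_mslicer.
suff -> : mslicer c F = 0 by rewrite mcoeff0.
by apply: f_eq0; rewrite -mslicer_tmap2 F0 linear0.
Qed.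

Lemma free_tens2 (S R X Y : choiceType) (v : S -> {malg k[X]})
    (u : S -> R -> {malg k[Y]}) :
  free_family v -> (forall s, free_family (u s)) ->
  free_family (fun sr : S * R => tens2 (v sr.1) (u sr.1 sr.2)).
Proof.
move=> freev freeu c vu0.
(* G = sum c_(s,r) e_s (x) u s r is sent to the given combination by lcomb v (x) id. *)
pose G := lcomb (fun sr : S * R => tens2 << sr.1 >> (u sr.1 sr.2)) c.
have G0 : G = 0.
  apply: (tmap2_idr_eq0 (f := lcomb v)) => //; rewrite linear_lcomb -vu0.
  by apply: eq_in_lcomb => sr _ /=; rewrite tmap2_tens2 /= lcombU1.
apply/malgP => -[s r]; rewrite mcoeff0 -mcoeff_mslicel.
suff -> : mslicel s c = 0 by rewrite mcoeff0.
have eq_mono x : (lcomb (u s) \o mslicel s) << x >> =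
    (mslicel s \o lcomb (fun sr : S * R => tens2 << sr.1 >> (u sr.1 sr.2))) << x >>.
  case: x => s' r' /=; rewrite lcombU1 -tens2U !mslicel_tens2 linearZ /= lcombU1.
  by rewrite mcoeffU; case: eqP => [-> | _]; rewrite ?scale0r.
apply: (freeu s); have /= -> := @eq_linear_monomials _ _ _ _ _ eq_mono c.
by rewrite -/G G0 linear0.
Qed.

End FreeTensor.

Section Iterate.
Variables (k : fieldType) (M : lmodType k).

Lemma iter_is_linear n (f : {linear M -> M}) : linear (iter n f).
Proof. by elim: n => [|n IHn] a u v //=; rewrite IHn linearP. Qed.

HB.instance Definition _ n (f : {linear M -> M}) :=
  GRing.isLinear.Build k M M *:%R (iter n f) (iter_is_linear n f).

End Iterate.

Lemma iter_stable (T : Type) (P : T -> Prop) (f : T -> T) :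
  (forall x, P x -> P (f x)) -> forall n x, P x -> P (iter n f x).
Proof. by move=> Pf; elim=> //= n IHn x /IHn /Pf. Qed.

Section Periodic.
Variables (T : Type) (f : T -> T) (p : nat).
Hypothesis f_periodic : forall x, iter p f x = x.

Lemma iterK_periodic l : (l <= p)%N -> cancel (iter l f) (iter (p - l) f).
Proof. by move=> le_lp x; rewrite -iterD subnK. Qed.

Lemma iterKV_periodic l : (l <= p)%N -> cancel (iter (p - l) f) (iter l f).
Proof. by move=> le_lp x; rewrite -iterD subnKC. Qed.

End Periodic.

Section TensorPeriodic.
Variables (k : fieldType) (A C : choiceType).
Variables (h : {linear {malg k[A]} -> {malg k[A]}})
  (g : {linear {malg k[C]} -> {malg k[C]}}).

Lemma iter_tmap2_tens2 l u w :
  iter l (tmap2 h g) (tens2 u w) = tens2 (iter l h u) (iter l g w).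
Proof. by elim: l => //= l ->; rewrite tmap2_tens2. Qed.

Lemma tmap2_periodic p :
    (forall u, iter p h u = u) -> (forall w, iter p g w = w) ->
  forall F, iter p (tmap2 h g) F = F.
Proof.
move=> hp gp F; rewrite (tens2_monomials F) linear_lcomb.
by apply: eq_in_lcomb => x _ /=; rewrite iter_tmap2_tens2 hp gp.
Qed.

End TensorPeriodic.

Section TensorSpan.
Variables (k : fieldType) (A C : choiceType).
Variables (N : {malg k[A]} -> Prop) (W : {malg k[C]} -> Prop).

Definition tens_span (F : {malg k[(A * C)%type]}) :=
  exists s : seq ({malg k[A]} * {malg k[C]}),
    (forall x, x \in s -> N x.1 /\ W x.2) /\ F = \sum_(x <- s) tens2 x.1 x.2.

Lemma tens_span_tens2 u w : N u -> W w -> tens_span (tens2 u w).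
Proof.
by exists [:: (u, w)]; split=> [x|]; rewrite ?big_seq1 // inE => /eqP ->.
Qed.

Lemma tens_span_ind (P : {malg k[(A * C)%type]} -> Prop) F : subspace P ->
  (forall u w, N u -> W w -> P (tens2 u w)) -> tens_span F -> P F.
Proof.
move=> subP P_tens [s [NWs ->]].
rewrite big_seq; apply: big_ind => [|F1 F2|x /NWs[]].
- exact: subspace0.
- exact: subspaceD.
- exact: P_tens.
Qed.

Lemma tens_span_subspace : subspace N -> subspace tens_span.
Proof.
move=> subN; split; first by exists [::]; rewrite big_nil.
move=> a _ _ [s1 [NW1 ->]] [s2 [NW2 ->]].
exists ([seq (a *: x.1, x.2) | x <- s1] ++ s2); split=> [x|].
  rewrite mem_cat => /orP[/mapP[y /NW1[Ny Wy] ->] | /NW2] //.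
  by split=> //; apply: subspaceZ.
rewrite big_cat big_map scaler_sumr; congr (_ + _).
by apply: eq_bigr => x _; rewrite linearZl_LR.
Qed.

Lemma tens_span_tmap2 (A' C' : choiceType)
    (f : {linear {malg k[A]} -> {malg k[A']}}) (h : {linear {malg k[C]} -> {malg k[C']}})
    (P : {malg k[(A' * C')%type]} -> Prop) F :
  subspace P -> (forall u w, N u -> W w -> P (tens2 (f u) (h w))) ->
  tens_span F -> P (tmap2 f h F).
Proof.
move=> subP P_tens; apply: (tens_span_ind (subspace_preim (tmap2 f h) subP)).
by move=> u w Nu Ww /=; rewrite tmap2_tens2; apply: P_tens.
Qed.

End TensorSpan.

Section Basis.
Variables (k : fieldType) (M : lmodType k).
Local Open Scope classical_set_scope.

Definition free_set (X : set M) := forall d : {malg k[M]},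
  (forall m, m \in msupp d -> X m) -> lcomb id d = 0 -> d = 0.

Lemma chain_seq_sub (F : set (set M)) (s : seq M) : total_on F subset ->
    (forall m, m \in s -> (\bigcup_(X in F) X) m) ->
  s = [::] \/ exists2 X, F X & forall m, m \in s -> X m.
Proof.
move=> totF; elim: s => [|m s IHs] s_F; first by left.
right; have [X0 FX0 X0m] := s_F m (mem_head _ _).
have /IHs[->|[X FX s_X]] : forall m', m' \in s -> (\bigcup_(X in F) X) m'.
  by move=> m' ms; apply: s_F; rewrite inE ms orbT.
  by exists X0 => // m'; rewrite inE => /eqP ->.
have [X0X|XX0] := totF X0 X FX0 FX.
  by exists X => // m'; rewrite inE => /predU1P[->|/s_X]; [apply: X0X|].
by exists X0 => // m'; rewrite inE => /predU1P[->|/s_X /XX0].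
Qed.

Lemma free_set_bigcup (F : set (set M)) : (forall X, F X -> free_set X) ->
  total_on F subset -> free_set (\bigcup_(X in F) X).
Proof.
move=> freeF totF d d_F d0; have [E|[X FX d_X]] := chain_seq_sub totF d_F.
  apply/malgP => m; rewrite mcoeff0 mcoeff_outdom //.
  by apply/negP => md; have : m \in (msupp d : seq M) := md; rewrite E.
exact: freeF d_X d0.
Qed.

Variable W : M -> Prop.

Lemma maximal_free_set_span (X : set M) : X `<=` W -> free_set X ->
    (forall Y, X `<` Y -> ~ (Y `<=` W /\ free_set Y)) ->
  forall v, W v -> exists d : {malg k[M]},
    (forall m, m \in msupp d -> X m) /\ v = lcomb id d.
Proof.
move=> XW freeX maxX v Wv; apply: contrapT => nspan.
have Xv : ~ X v.
  move=> Xv; apply: nspan; exists << v >>; rewrite lcombU1; split=> // m.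
  by move/(fsubsetP msuppU_le); rewrite inE => /eqP ->.
apply: (maxX (X `|` [set v])); first split.
- by move=> m Xm; left.
- by move=> /(_ v (or_intror erefl)).
split=> [m [/XW //|->] //|d d_Xv d0].
have [dv0|dv_neq0] := eqVneq d@_v 0.
  apply: freeX d0 => m md; have [//|mv] := d_Xv m md.
  by move: md; rewrite -mcoeff_neq0 mv dv0 eqxx.
exfalso; apply: nspan; exists (- (d@_v)^-1 *: (d - d@_v *: << v >>)); split.
  move=> m; rewrite -mcoeff_neq0 mcoeffZ mcoeffB mcoeffZ mcoeffU.
  have [<-|vm] := eqVneq v m; first by rewrite mulr1n mulr1 subrr mulr0 eqxx.
  rewrite mulr0n mulr0 subr0 mulf_eq0 negb_or mcoeff_neq0 => /andP[_ md].
  by have [//|mv] := d_Xv m md; rewrite mv eqxx in vm.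
rewrite linearZ linearB linearZ /= lcombU1 d0 sub0r scalerN scaleNr opprK scalerA.
by rewrite mulVf // scale1r.
Qed.

Lemma free_spanning_subfamily : exists (K : choiceType) (w : K -> M),
  [/\ forall b, W (w b), free_family w & forall v, W v -> exists d, v = lcomb w d].
Proof.
have [A [[AW freeA] maxA]] :
    exists A, (A `<=` W /\ free_set A) /\
              forall B, A `<` B -> ~ (B `<=` W /\ free_set B).
  apply: Zorn_bigcup => F F_free totF; split.
    by move=> m [X /F_free[XW _] /XW].
  by apply: free_set_bigcup totF => X /F_free[].
exists {m : M | `[< A m >]}, val; split.
- by move=> [m /= /asboolP Am]; apply: AW.
- move=> d d0; pose e := mpush (fun t => Some (val t)) d.
  have e0 : e = 0.
    apply: freeA; last by rewrite lcomb_mpush.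
    move=> m; rewrite -mcoeff_neq0; have [Am|nAm] := pselect (A m) => //.
    rewrite mcoeff_mpush_out ?eqxx // => t; apply/eqP => -[tm].
    by apply: nAm; rewrite -tm; apply/asboolP; apply: (valP t).
  apply/malgP => t; rewrite mcoeff0.
  rewrite -(@mcoeff_mpush _ _ _ (fun t => Some (val t)) d t (val t)) //.
    by rewrite -/e e0 mcoeff0.
  by move=> t' [/val_inj].
- move=> v /(maximal_free_set_span AW freeA maxA)[d [d_A ->]].
  exists (mpush insub d); rewrite lcomb_mpush; apply: eq_in_lcomb => m /d_A Am /=.
  by rewrite insubT //; apply/asboolP.
Qed.

End Basis.

Definition orbit_family (k : fieldType) (M : lmodType k) (p : nat) (g : M -> M)
    (J : choiceType) (x : J -> M) : J * 'I_p -> M :=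
  fun ji => iter ji.2 g (x ji.1).
Arguments orbit_family {k M} p g {J} x.

Lemma free_quotE (k : fieldType) (p : nat) (M : lmodType k) (g : M -> M)
    (N : M -> Prop) :
  free_quot p g N = exists (J : choiceType) (x : J -> M),
    (forall m, span_mod N (orbit_family p g x) m) /\ free_mod N (orbit_family p g x).
Proof. by []. Qed.

Section TensorQuotient.
Variables (k : fieldType) (p : nat) (A B : choiceType).
Variables (h : {linear {malg k[A]} -> {malg k[A]}})
  (g : {linear {malg k[B]} -> {malg k[B]}}).
Hypotheses (h_periodic : forall u, iter p h u = u)
  (g_periodic : forall v, iter p g v = v).
Variables (N : {malg k[A]} -> Prop) (W : {malg k[B]} -> Prop).
Hypotheses (subN : subspace N) (subW : subspace W) (W_stable : forall v, W v -> W (g v)).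

Let h_inj (l : 'I_p) : injective (iter l h).
Proof. exact: can_inj (iterK_periodic h_periodic (ltnW (ltn_ord l))). Qed.

Let g_inj (l : 'I_p) : injective (iter l g).
Proof. exact: can_inj (iterK_periodic g_periodic (ltnW (ltn_ord l))). Qed.

Lemma tens2_iterl (l : 'I_p) u v :
  tens2 (iter l h u) v = iter l (tmap2 h g) (tens2 u (iter (p - l) g v)).
Proof. by rewrite iter_tmap2_tens2 (iterKV_periodic g_periodic) // ltnW. Qed.

Lemma tens2_iterr (l : 'I_p) u v :
  tens2 u (iter l g v) = iter l (tmap2 h g) (tens2 (iter (p - l) h u) v).
Proof. by rewrite iter_tmap2_tens2 (iterKV_periodic h_periodic) // ltnW. Qed.

Section Generators.
Variables (I J K : choiceType).
Variables (y : I -> {malg k[A]}) (x : J -> {malg k[B]}) (w : K -> {malg k[B]}).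
Hypotheses (span_y : forall u, span_mod N (orbit_family p h y) u)
  (free_y : free_mod N (orbit_family p h y)).
Hypotheses (span_x : forall v, span_mod W (orbit_family p g x) v)
  (free_x : free_mod W (orbit_family p g x)).
Hypotheses (W_w : forall b, W (w b)) (free_w : free_family w)
  (span_w : forall v, W v -> exists d, v = lcomb w d).

Definition tens_gen (s : (A * J) + (I * K)) : {malg k[(A * B)%type]} :=
  match s with
  | inl (a, j) => tens2 << a >> (x j)
  | inr (i, b) => tens2 (y i) (w b)
  end.

Local Notation NW := (tens_span N W).
Local Notation orbit := (orbit_family p (tmap2 h g) tens_gen).

Let subNW : subspace NW := tens_span_subspace W subN.
Let subS : subspace (span_mod NW orbit) := span_mod_subspace orbit subNW.

Lemma span_tens_gen_W u v : W v -> span_mod NW orbit (tens2 u v).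
Proof.
move=> Wv; have [c Nc] := span_y u.
rewrite -(subrK (lcomb (orbit_family p h y) c) u) linearDl.
apply: (subspaceD subS); first exact/span_mod_sub/tens_span_tens2.
rewrite /= tens2_lcombl; apply: (subspace_lcomb subS) => -[i l] _ /=.
rewrite tens2_iterl; have [d ->] := span_w (iter_stable W_stable (p - l) Wv).
rewrite tens2_lcombr linear_lcomb; apply: (subspace_lcomb subS) => b _ /=.
exact: (span_mod_family orbit (inr (i, b), l) subNW).
Qed.

Lemma span_tens_gen_tens2 u v : span_mod NW orbit (tens2 u v).
Proof.
have [c Wc] := span_x v.
rewrite -(subrK (lcomb (orbit_family p g x) c) v) linearDr.
apply: (subspaceD subS); first exact: span_tens_gen_W.
rewrite /= tens2_lcombr; apply: (subspace_lcomb subS) => -[j l] _ /=.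
rewrite tens2_iterr -[iter _ h u]lcomb_monomials tens2_lcombl linear_lcomb.
apply: (subspace_lcomb subS) => a _ /=.
exact: (span_mod_family orbit (inl (a, j), l) subNW).
Qed.

Lemma span_tens_gen F : span_mod NW orbit F.
Proof.
rewrite (tens2_monomials F); apply: (subspace_lcomb subS) => xy _.
exact: span_tens_gen_tens2.
Qed.

Lemma free_tens_gen_inl c : NW (lcomb orbit c) -> forall a j l, c@_(inl (a, j), l) = 0.
Proof.
move=> NWc a j l; have [P [PW Px]] := free_mod_projection subW span_x free_x.
(* id (x) P kills N (x) W and the y_i (x) g^l w_b, and fixes the g^l e_a (x) g^l x_j. *)
pose phi (t : ((A * J) + (I * K)) * 'I_p) :=
  if t is (inl (a', j'), l') then Some ((j', l'), a') else None.
pose F (ja : (J * 'I_p) * A) :=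
  tens2 (iter ja.1.2 h << ja.2 >>) (orbit_family p g x ja.1).
have freeF : free_family F.
  apply: (free_family_of_comp (phi := tswap)).
  have free_hmono (s : J * 'I_p) : free_family (fun a => iter s.2 h << a >>).
    exact: (free_family_comp (@h_inj s.2) (free_monomials (T := A))).
  apply: eq_free_family (free_tens2 (free_mod_family (subspace0 subW) free_x) free_hmono).
  by move=> -[[j' l'] a'] /=; rewrite tswap_tens2.
have kill : tmap2 idfun P (lcomb orbit c) = 0.
  apply: (tens_span_tmap2 zero_subspace _ NWc) => u v _ Wv /=.
  by rewrite PW ?linear0r.
have : lcomb F (mpush phi c) = 0.
  rewrite lcomb_mpush -[RHS]kill linear_lcomb /orbit_family.
  apply: eq_in_lcomb => -[[[a' j'] | [i b]] l'] _ /=.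
    by rewrite iter_tmap2_tens2 tmap2_tens2 /= (Px (j', l')).
  rewrite iter_tmap2_tens2 tmap2_tens2 /= PW ?linear0r //.
  exact: iter_stable W_stable _ _ (W_w b).
move=> /freeF /(congr1 (mcoeff ((j, l), a))); rewrite mcoeff0 => <-.
by apply/esym/mcoeff_mpush => // -[[[a' j'] | ?] l'] //= [-> -> ->].
Qed.

Lemma free_tens_gen_inr c : NW (lcomb orbit c) -> forall i b l, c@_(inr (i, b), l) = 0.
Proof.
move=> NWc i b l; have [P [PN Py]] := free_mod_projection subN span_y free_y.
(* Only the y_i (x) w_b are left in c, and P (x) id kills N (x) W and fixes them. *)
pose phi (t : ((A * J) + (I * K)) * 'I_p) :=
  if t is (inr (i', b'), l') then Some ((i', l'), b') else None.
pose F (ib : (I * 'I_p) * K) :=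
  tens2 (orbit_family p h y ib.1) (iter ib.1.2 g (w ib.2)).
have freeF : free_family F := free_tens2 (free_mod_family (subspace0 subN) free_y)
  (fun s => free_family_comp (@g_inj s.2) free_w).
have kill : tmap2 P idfun (lcomb orbit c) = 0.
  apply: (tens_span_tmap2 zero_subspace _ NWc) => u v Nu _ /=.
  by rewrite PN ?linear0l.
have : lcomb F (mpush phi c) = 0.
  rewrite lcomb_mpush -[RHS]kill linear_lcomb /orbit_family.
  apply: eq_in_lcomb => -[[[a j] | [i' b']] l'] /=.
    by rewrite -mcoeff_neq0 (free_tens_gen_inl NWc) eqxx.
  by rewrite iter_tmap2_tens2 tmap2_tens2 /= (Py (i', l')).
move=> /freeF /(congr1 (mcoeff ((i, l), b))); rewrite mcoeff0 => <-.
by apply/esym/mcoeff_mpush => // -[[? | [i' b']] l'] //= [-> -> ->].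
Qed.

Lemma free_tens_gen : free_mod NW orbit.
Proof.
move=> c NWc; apply/malgP => -[[[a j] | [i b]] l]; rewrite mcoeff0.
- exact: free_tens_gen_inl.
- exact: free_tens_gen_inr.
Qed.

End Generators.

Lemma free_quot_tens :
  free_quot p h N -> free_quot p g W -> free_quot p (tmap2 h g) (tens_span N W).
Proof.
rewrite !free_quotE => -[I [y [span_y free_y]]] [J [x [span_x free_x]]].
have [K [w [W_w free_w span_w]]] := free_spanning_subfamily W.
exists ((A * J) + (I * K))%type, (tens_gen y x w); split.
- exact: span_tens_gen.
- exact: free_tens_gen.
Qed.

End TensorQuotient.

Lemma tpow_map_is_linear (k : fieldType) (B : choiceType)
    (g : {linear {malg k[B]} -> {malg k[B]}}) n :
  linear (@tpow_map k B n g).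
Proof. by case: n => [|n] //=; apply: linearP. Qed.

HB.instance Definition _ (k : fieldType) (B : choiceType)
    (g : {linear {malg k[B]} -> {malg k[B]}}) n :=
  GRing.isLinear.Build k _ _ *:%R (@tpow_map k B n g) (@tpow_map_is_linear k B g n).

Section TensorPower.
Variables (k : fieldType) (p : nat) (B : choiceType).
Variables (g : {linear {malg k[B]} -> {malg k[B]}}) (W : {malg k[B]} -> Prop).
Hypotheses (g_periodic : forall v, iter p g v = v) (subW : subspace W).
Hypothesis W_stable : forall v, W v -> W (g v).

Local Notation tpow_g n := (@tpow_map k B n g).
Local Notation tpow_W n := (@tpow_sub k B n W).

Lemma tpow_map_periodic n F : iter p (tpow_g n) F = F.
Proof.
elim: n F => [|n IHn] F /=; last exact: tmap2_periodic.
by elim: p.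
Qed.

Lemma tpow_sub_subspace n : subspace (tpow_W n).
Proof. by elim: n => [|n IHn]; [split | apply: tens_span_subspace]. Qed.

Lemma free_quot_tpow : free_quot p g W -> forall n, free_quot p (tpow_g n) (tpow_W n).
Proof.
move=> freeW; elim=> [|n IHn].
  exists void, (fun v : void => match v with end); split=> [m|c _]; first by exists 0.
  by apply/malgP => -[[]].
exact: (free_quot_tens (tpow_map_periodic (n := n)) g_periodic
  (tpow_sub_subspace n) subW W_stable IHn freeW).
Qed.

End TensorPower.

Theorem lemma2p8 (k : fieldType) (p : nat)
  (charp : p \in [pchar k]) (perf : perfect_char k p)
  (B : choiceType) (g : {linear {malg k[B]} -> {malg k[B]}})
  (g_order : forall v, iter p g v = v)
  (W : {malg k[B]} -> Prop)
  (W0 : W 0)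
  (W_lin : forall (a : k) u v, W u -> W v -> W (a *: u + v))
  (W_stable : forall w, W w -> W (g w))
  (free_VW : free_quot p g W) :
  forall n : nat, (2 <= n)%N -> free_quot p (@tpow_map k B n g) (@tpow_sub k B n W).
Proof. by move=> n _; apply: free_quot_tpow => //; split. Qed.
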